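(* In the calculus $\mathcal{L}$ described in the context, reduction preserves typing of commands: for every type $A$ and commands $c_1,c_2$, if $c_1:A$ and $c_1\rightsquigarrow c_2$, then $c_2:A$. The same holds in the ordered fragment, i.e. when all judgements $\vdash_p$ (for expressions, stacks and commands) are required to be derived without the rule (struct).
   Context: Polarities are $\varepsilon\in\{+,-\}$. Types: positive $P,Q ::= R \mid 1 \mid A\otimes B \mid A\oplus B$; negative $N,M ::= A\multimap B \mid A\,\&\,B$; $\varpi(P)=+$, $\varpi(N)=-$ ($R$ is an atomic type of resources). Fix variables and resource constants $r_n$ ($n\in\mathbb N$). Expressions $t,u$ and values $v,w$: $t,u ::= v \mid (\mathrm{let}\ x^+=t\ \mathrm{in}\ u)^+ \mid (\mathrm{let}\ x^-=v\ \mathrm{in}\ u)^+ \mid \delta(v,(x,y).t)^+ \mid \delta(v,().t)^+ \mid \delta(v,x.t,y.u)^+ \mid (v\,w)^+ \mid (\pi_1 v)^+ \mid (\pi_2 v)^+$; $v,w ::= (\mathrm{let}\ x^+=t\ \mathrm{in}\ v)^- \mid (\mathrm{let}\ x^-=v\ \mathrm{in}\ w)^- \mid \delta(v,(x,y).w)^- \mid \delta(v,().w)^- \mid \delta(v,x.w,y.w')^- \mid (v\,w)^- \mid (\pi_1 v)^- \mid (\pi_2 v)^- \mid x \mid \mathrm{new} \mid \mathrm{delete} \mid (v,w) \mid () \mid \iota_1 v \mid \iota_2 v \mid \lambda x.t \mid \langle t,u\rangle \mid r_n$. $t[v/x]$ is capture-avoiding substitution. Contexts are finite lists of typed variables. Typing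 rules ($v,w$ range over values): (var) $x:A\vdash x:A$. (struct) from $\Gamma\vdash t:A$ and a type-preserving bijection $\sigma$ from entries of $\Gamma$ to entries of $\Gamma'$ (permutation plus renaming) derive $\Gamma'\vdash t[\sigma]:A$. $\vdash\mathrm{new}:1\multimap(R\oplus 1)$; $\vdash\mathrm{delete}:R\multimap 1$. (let) from $\Delta\vdash t:A$, $\Gamma,x:A\vdash u:B$ derive $\Gamma,\Delta\vdash(\mathrm{let}\ x^{\varpi(A)}=t\ \mathrm{in}\ u)^{\varpi(B)}:B$. From $\Gamma\vdash v:A$, $\Delta\vdash w:B$ derive $\Gamma,\Delta\vdash(v,w):A\otimes B$; from $\Delta\vdash v:A\otimes B$, $\Gamma,x:A,y:B,\Gamma'\vdash t:C$ derive $\Gamma,\Delta,\Gamma'\vdash\delta(v,(x,y).t)^{\varpi(C)}:C$. $\vdash():1$; from $\Delta\vdash v:1$, $\Gamma,\Gamma'\vdash t:A$ derive $\Gamma,\Delta,\Gamma'\vdash\delta(v,().t)^{\varpi(A)}:A$. From $\Gamma\vdash v:A$ derive $\Gamma\vdash\iota_1v:A\oplus B$; from $\Gamma\vdash v:B$ derive $\Gamma\vdash\iota_2v:A\oplus B$; from $\Delta\vdash v:A\oplus B$, $\Gamma,x:A,\Gamma'\vdash t:C$, $\Gamma,y:B,\Gamma'\vdash u:C$ derive $\Gamma,\Delta,\Gamma'\vdash\delta(v,x.t,y.u)^{\varpi(C)}:C$. From $x:A,\Gamma\vdash t:B$ derive $\Gamma\vdash\lambda x.t:A\multimap B$; from $\Gamma\vdash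 w:A$, $\Delta\vdash v:A\multimap B$ derive $\Gamma,\Delta\vdash(v\,w)^{\varpi(B)}:B$. From $\Gamma\vdash t:A$, $\Gamma\vdash u:B$ derive $\Gamma\vdash\langle t,u\rangle:A\&B$; from $\Gamma\vdash v:A_1\&A_2$ derive $\Gamma\vdash(\pi_iv)^{\varpi(A_i)}:A_i$. $\vdash_p$ is generated by these rules plus the axioms $\vdash_p r_n:R$. Machine: stacks $s ::= \star \mid v^\varepsilon\cdot s \mid \pi_i^\varepsilon\cdot s \mid (x^+.u)^\varepsilon\cdot s$; lists $l ::= []\mid r_n::l$; commands $\langle t\mid s\mid l\rangle^\varepsilon$. Stack typing $s:A\vdash_p C$: $\star:A\vdash_p A$; if $s:B\vdash_p C$, $\varepsilon=\varpi(B)$ and $\vdash_p v:A$ then $v^\varepsilon\cdot s:A\multimap B\vdash_p C$; if $s:B\vdash_p C$, $\varepsilon=\varpi(B)$ and $x:A\vdash_p t:B$ then $(x^+.t)^\varepsilon\cdot s:A\vdash_p C$; if $s:A_i\vdash_p C$ and $\varepsilon=\varpi(A_i)$ then $\pi_i^\varepsilon\cdot s:A_1\&A_2\vdash_p C$. A command is typed, $\langle t\mid s\mid l\rangle^\varepsilon:A$, iff there is $B$ with $\varpi(B)=\varepsilon$, $\vdash_p t:B$ and $s:B\vdash_p A$. Reduction $\rightsquigarrow$ ($i\in\{1,2\}$): $\langle(\mathrm{let}\ x^-=v\ \mathrm{in}\ t)^\varepsilon\mid s\mid l\rangle^\varepsilon\rightsquigarrow\langle t[v/x]\mid s\mid l\rangle^\varepsilon$;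 $\langle(\mathrm{let}\ x^+=t\ \mathrm{in}\ u)^\varepsilon\mid s\mid l\rangle^\varepsilon\rightsquigarrow\langle t\mid (x^+.u)^\varepsilon\cdot s\mid l\rangle^+$; $\langle v\mid (x^+.t)^\varepsilon\cdot s\mid l\rangle^+\rightsquigarrow\langle t[v/x]\mid s\mid l\rangle^\varepsilon$; $\langle (v\,w)^\varepsilon\mid s\mid l\rangle^\varepsilon\rightsquigarrow\langle v\mid w^\varepsilon\cdot s\mid l\rangle^-$; $\langle \lambda x.t\mid v^\varepsilon\cdot s\mid l\rangle^-\rightsquigarrow\langle t[v/x]\mid s\mid l\rangle^\varepsilon$; $\langle (\pi_i v)^\varepsilon\mid s\mid l\rangle^\varepsilon\rightsquigarrow\langle v\mid \pi_i^\varepsilon\cdot s\mid l\rangle^-$; $\langle \langle t_1,t_2\rangle\mid \pi_i^\varepsilon\cdot s\mid l\rangle^-\rightsquigarrow\langle t_i\mid s\mid l\rangle^\varepsilon$; $\langle \delta((v,w),(x,y).t)^\varepsilon\mid s\mid l\rangle^\varepsilon\rightsquigarrow\langle t[v/x,w/y]\mid s\mid l\rangle^\varepsilon$; $\langle \delta((),().t)^\varepsilon\mid s\mid l\rangle^\varepsilon\rightsquigarrow\langle t\mid s\mid l\rangle^\varepsilon$; $\langle \delta(\iota_i v,x_1.t_1,x_2.t_2)^\varepsilon\mid s\mid l\rangle^\varepsilon\rightsquigarrow\langle t_i[v/x_i]\mid s\mid l\rangle^\varepsilon$; $\langle \mathrm{new}\mid ()^{\varepsilon}\cdot s\mid r_n::l\rangle^-\rightsquigarrow\langle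 \iota_1 r_n\mid s\mid l\rangle^+$; $\langle \mathrm{new}\mid ()^{\varepsilon}\cdot s\mid []\rangle^-\rightsquigarrow\langle \iota_2 ()\mid s\mid []\rangle^+$; $\langle \mathrm{delete}\mid r_n^{\varepsilon}\cdot s\mid l\rangle^-\rightsquigarrow\langle ()\mid s\mid r_n::l\rangle^+$. *)

From Stdlib Require Import List Arith Permutation.
Import ListNotations.

Inductive pol : Type := Pos | Neg.

Inductive ty : Type :=
| TR : ty                     (* atomic resource type R *)
| T1 : ty
| Tensor : ty -> ty -> ty
| Plus : ty -> ty -> ty
| Lolli : ty -> ty -> ty
| With : ty -> ty -> ty.

Definition polarity (A : ty) : pol :=
  match A with
  | TR | T1 | Tensor _ _ | Plus _ _ => Pos
  | Lolli _ _ | With _ _ => Neg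
  end.

Inductive idx : Type := i1 | i2.
Definition choose {X : Type} (i : idx) (a b : X) : X :=
  match i with i1 => a | i2 => b end.

Definition var := nat.

(** * Raw syntax (expressions and values share one type; the polarity
    annotations of the paper are kept as data; the grammar is the predicate
    [Value]/[Expr] below). *)
Inductive term : Type :=
| TLet (px : pol) (x : var) (t u : term) (p : pol)       (* (let x^px = t in u)^p *)
| TDpair (v : term) (x y : var) (t : term) (p : pol)     (* delta(v,(x,y).t)^p *)
| TDunit (v t : term) (p : pol)                          (* delta(v,().t)^p *)
| TDsum (v : term) (x : var) (t : term) (y : var) (u : term) (p : pol)
                                                         (* delta(v,x.t,y.u)^p *)
| TApp (v w : term) (p : pol)
| TProj (i : idx) (v : term) (p : pol)
| TVar (x : var)
| TNew
| TDelete
| TPair (v w : term)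
| TUnit
| TInj (i : idx) (v : term)
| TLam (x : var) (t : term)
| TWith (t u : term)
| TRes (n : nat).

Inductive Value : term -> Prop :=
| V_letP x t v : Expr t -> Value v -> Value (TLet Pos x t v Neg)
| V_letN x v w : Value v -> Value w -> Value (TLet Neg x v w Neg)
| V_dpair v x y w : Value v -> Value w -> Value (TDpair v x y w Neg)
| V_dunit v w : Value v -> Value w -> Value (TDunit v w Neg)
| V_dsum v x w y w' : Value v -> Value w -> Value w' -> Value (TDsum v x w y w' Neg)
| V_app v w : Value v -> Value w -> Value (TApp v w Neg)
| V_proj i v : Value v -> Value (TProj i v Neg)
| V_var x : Value (TVar x)
| V_new : Value TNew
| V_delete : Value TDelete
| V_pair v w : Value v -> Value w -> Value (TPair v w)
| V_unit : Value TUnit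
| V_inj i v : Value v -> Value (TInj i v)
| V_lam x t : Expr t -> Value (TLam x t)
| V_with t u : Expr t -> Expr u -> Value (TWith t u)
| V_res n : Value (TRes n)
with Expr : term -> Prop :=
| E_val v : Value v -> Expr v
| E_letP x t u : Expr t -> Expr u -> Expr (TLet Pos x t u Pos)
| E_letN x v u : Value v -> Expr u -> Expr (TLet Neg x v u Pos)
| E_dpair v x y t : Value v -> Expr t -> Expr (TDpair v x y t Pos)
| E_dunit v t : Value v -> Expr t -> Expr (TDunit v t Pos)
| E_dsum v x t y u : Value v -> Expr t -> Expr u -> Expr (TDsum v x t y u Pos)
| E_app v w : Value v -> Value w -> Expr (TApp v w Pos)
| E_proj i v : Value v -> Expr (TProj i v Pos).

Fixpoint fv (t : term) : list var :=
  match t with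
  | TLet _ x t u _ => fv t ++ remove Nat.eq_dec x (fv u)
  | TDpair v x y t _ => fv v ++ remove Nat.eq_dec x (remove Nat.eq_dec y (fv t))
  | TDunit v t _ => fv v ++ fv t
  | TDsum v x t y u _ =>
      fv v ++ remove Nat.eq_dec x (fv t) ++ remove Nat.eq_dec y (fv u)
  | TApp v w _ => fv v ++ fv w
  | TProj _ v _ => fv v
  | TVar x => [x]
  | TNew | TDelete | TUnit | TRes _ => []
  | TPair v w => fv v ++ fv w
  | TInj _ v => fv v
  | TLam x t => remove Nat.eq_dec x (fv t)
  | TWith t u => fv t ++ fv u
  end.

Definition upd (s : var -> term) (x : var) (v : term) : var -> term :=
  fun w => if Nat.eq_dec w x then v else s w.

(** variables that a binder of [body] (binding [bs]) must avoid under [s] *)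
Definition avoid (s : var -> term) (bs : list var) (body : term) : list var :=
  flat_map (fun w => if in_dec Nat.eq_dec w bs then [] else fv (s w)) (fv body).

Definition fresh (W : list var) : var := S (list_max W).

Definition pick (y : var) (W : list var) : var :=
  if in_dec Nat.eq_dec y W then fresh W else y.

Fixpoint subst (s : var -> term) (t : term) : term :=
  match t with
  | TLet px x t u p =>
      let z := pick x (avoid s [x] u) in
      TLet px z (subst s t) (subst (upd s x (TVar z)) u) p
  | TDpair v x y t p =>
      let W := avoid s [x; y] t in
      let z1 := pick x W in
      let z2 := pick y (z1 :: W) in
      TDpair (subst s v) z1 z2 (subst (upd (upd s x (TVar z1)) y (TVar z2)) t) p
  | TDunit v t p => TDunit (subst s v) (subst s t) p
  | TDsum v x t y u p =>
      let z1 := pick x (avoid s [x] t) in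
      let z2 := pick y (avoid s [y] u) in
      TDsum (subst s v) z1 (subst (upd s x (TVar z1)) t)
                        z2 (subst (upd s y (TVar z2)) u) p
  | TApp v w p => TApp (subst s v) (subst s w) p
  | TProj i v p => TProj i (subst s v) p
  | TVar x => s x
  | TNew => TNew
  | TDelete => TDelete
  | TPair v w => TPair (subst s v) (subst s w)
  | TUnit => TUnit
  | TInj i v => TInj i (subst s v)
  | TLam x t =>
      let z := pick x (avoid s [x] t) in
      TLam z (subst (upd s x (TVar z)) t)
  | TWith t u => TWith (subst s t) (subst s u)
  | TRes n => TRes n
  end.

Definition subst1 (v : term) (x : var) (t : term) : term :=
  subst (upd TVar x v) t.
Definition subst2 (v : term) (x : var) (w : term) (y : var) (t : term) : term :=
  subst (upd (upd TVar x v) y w) t.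
Definition rename (rho : var -> var) (t : term) : term :=
  subst (fun x => TVar (rho x)) t.

(** * Typing: contexts are lists of typed variables with distinct names.
    [typ st G t A] is  G |-_p t : A ; the flag [st] says whether the rule
    (struct) is allowed ([st = false] is the ordered fragment). *)
Definition ctx := list (var * ty).
Definition dom (G : ctx) : list var := map fst G.

Inductive typ (st : bool) : ctx -> term -> ty -> Prop :=
| T_var x A : typ st [(x, A)] (TVar x) A
| T_struct G G' t A (rho : var -> var) :
    st = true ->
    typ st G t A ->
    NoDup (dom G') ->
    Permutation (map (fun e => (rho (fst e), snd e)) G) G' ->
    typ st G' (rename rho t) A
| T_new : typ st [] TNew (Lolli T1 (Plus TR T1))
| T_delete : typ st [] TDelete (Lolli TR T1)
| T_let G D x t u A B :
    typ st D t A ->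
    typ st (G ++ [(x, A)]) u B ->
    NoDup (dom (G ++ D)) ->
    typ st (G ++ D) (TLet (polarity A) x t u (polarity B)) B
| T_pair G D v w A B :
    Value v -> Value w ->
    typ st G v A -> typ st D w B ->
    NoDup (dom (G ++ D)) ->
    typ st (G ++ D) (TPair v w) (Tensor A B)
| T_dpair G D G' v x y t A B C :
    Value v ->
    typ st D v (Tensor A B) ->
    typ st (G ++ (x, A) :: (y, B) :: G') t C ->
    NoDup (dom (G ++ D ++ G')) ->
    typ st (G ++ D ++ G') (TDpair v x y t (polarity C)) C
| T_unit : typ st [] TUnit T1
| T_dunit G D G' v t A :
    Value v ->
    typ st D v T1 ->
    typ st (G ++ G') t A ->
    NoDup (dom (G ++ D ++ G')) ->
    typ st (G ++ D ++ G') (TDunit v t (polarity A)) A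
| T_inj1 G v A B : Value v -> typ st G v A -> typ st G (TInj i1 v) (Plus A B)
| T_inj2 G v A B : Value v -> typ st G v B -> typ st G (TInj i2 v) (Plus A B)
| T_dsum G D G' v x t y u A B C :
    Value v ->
    typ st D v (Plus A B) ->
    typ st (G ++ (x, A) :: G') t C ->
    typ st (G ++ (y, B) :: G') u C ->
    NoDup (dom (G ++ D ++ G')) ->
    typ st (G ++ D ++ G') (TDsum v x t y u (polarity C)) C
| T_lam G x t A B :
    typ st ((x, A) :: G) t B -> typ st G (TLam x t) (Lolli A B)
| T_app G D v w A B :
    Value w -> Value v ->
    typ st G w A -> typ st D v (Lolli A B) ->
    NoDup (dom (G ++ D)) ->
    typ st (G ++ D) (TApp v w (polarity B)) B
| T_with G t u A B :
    typ st G t A -> typ st G u B -> typ st G (TWith t u) (With A B)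
| T_proj1 G v A1 A2 :
    Value v -> typ st G v (With A1 A2) -> typ st G (TProj i1 v (polarity A1)) A1
| T_proj2 G v A1 A2 :
    Value v -> typ st G v (With A1 A2) -> typ st G (TProj i2 v (polarity A2)) A2
| T_res n : typ st [] (TRes n) TR.

Inductive stack : Type :=
| Star : stack
| SVal (v : term) (e : pol) (s : stack)
| SProj (i : idx) (e : pol) (s : stack)
| SBind (x : var) (t : term) (e : pol) (s : stack).

Definition rlist := list nat.  (* r_{n1} :: r_{n2} :: ... :: [] *)

Inductive cmd : Type := Cmd (t : term) (s : stack) (l : rlist) (e : pol).

(** stack typing  s : A |-_p C *)
Inductive styp (st : bool) : stack -> ty -> ty -> Prop :=
| S_star A : styp st Star A A
| S_val v e s A B C :
    styp st s B C -> e = polarity B -> Value v -> typ st [] v A ->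
    styp st (SVal v e s) (Lolli A B) C
| S_bind x t e s A B C :
    styp st s B C -> e = polarity B -> typ st [(x, A)] t B ->
    styp st (SBind x t e s) A C
| S_proj i e s A1 A2 C :
    styp st s (choose i A1 A2) C -> e = polarity (choose i A1 A2) ->
    styp st (SProj i e s) (With A1 A2) C.

Definition ctyp (st : bool) (c : cmd) (A : ty) : Prop :=
  match c with
  | Cmd t s l e => exists B, polarity B = e /\ typ st [] t B /\ styp st s B A
  end.

Inductive red : cmd -> cmd -> Prop :=
| R_letN x v t s l e : Value v ->
    red (Cmd (TLet Neg x v t e) s l e) (Cmd (subst1 v x t) s l e)
| R_letP x t u s l e :
    red (Cmd (TLet Pos x t u e) s l e) (Cmd t (SBind x u e s) l Pos)
| R_bind v x t e s l : Value v ->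
    red (Cmd v (SBind x t e s) l Pos) (Cmd (subst1 v x t) s l e)
| R_app v w s l e : Value v -> Value w ->
    red (Cmd (TApp v w e) s l e) (Cmd v (SVal w e s) l Neg)
| R_lam x t v e s l : Value v ->
    red (Cmd (TLam x t) (SVal v e s) l Neg) (Cmd (subst1 v x t) s l e)
| R_proj i v s l e : Value v ->
    red (Cmd (TProj i v e) s l e) (Cmd v (SProj i e s) l Neg)
| R_with t1 t2 i e s l :
    red (Cmd (TWith t1 t2) (SProj i e s) l Neg) (Cmd (choose i t1 t2) s l e)
| R_dpair v w x y t s l e : Value v -> Value w ->
    red (Cmd (TDpair (TPair v w) x y t e) s l e) (Cmd (subst2 v x w y t) s l e)
| R_dunit t s l e :
    red (Cmd (TDunit TUnit t e) s l e) (Cmd t s l e)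
| R_dsum i v x1 t1 x2 t2 s l e : Value v ->
    red (Cmd (TDsum (TInj i v) x1 t1 x2 t2 e) s l e)
        (Cmd (subst1 v (choose i x1 x2) (choose i t1 t2)) s l e)
| R_new_some e s n l :
    red (Cmd TNew (SVal TUnit e s) (n :: l) Neg) (Cmd (TInj i1 (TRes n)) s l Pos)
| R_new_none e s :
    red (Cmd TNew (SVal TUnit e s) [] Neg) (Cmd (TInj i2 TUnit) s [] Pos)
| R_delete n e s l :
    red (Cmd TDelete (SVal (TRes n) e s) l Neg) (Cmd TUnit s (n :: l) Pos).

(* Subject reduction is proved for [ptyp], a presentation of the typing rules
   in which (struct) only permutes the context.  Both systems derive the same
   judgements: the renamings of (struct) are admissible in [ptyp], and the
   identity substitution fixes typed terms.  In [ptyp] a permutation of the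
   empty context is empty, so closed terms can be inverted, and every
   substitution performed by the machine is an instance of one lemma: replacing
   the variables of a typed term injectively by variables, or by closed values
   of their types, preserves its type in the correspondingly renamed and
   shrunk context.  The binder names chosen by [subst] never capture, because
   the context of a typed term consists of free variables of the term. *)

From Stdlib Require Import Arith List Permutation Lia FunctionalExtensionality.
Import ListNotations.

Lemma fresh_not_in W : ~ In (fresh W) W.
Proof.
  unfold fresh; intro Hin.
  assert (Hle : Forall (fun k => k <= list_max W) W) by (apply list_max_le; lia).
  rewrite Forall_forall in Hle; specialize (Hle _ Hin); lia.
Qed.

Lemma pick_not_in x W : ~ In (pick x W) W.
Proof. unfold pick; destruct (in_dec Nat.eq_dec x W); auto using fresh_not_in. Qed.

Lemma pick_id x W : ~ In x W -> pick x W = x.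
Proof. unfold pick; destruct (in_dec Nat.eq_dec x W); tauto. Qed.

Lemma in_remove_iff x y l : In x (remove Nat.eq_dec y l) <-> In x l /\ x <> y.
Proof. split; [apply in_remove | intros []; apply in_in_remove; auto]. Qed.

Lemma dom_app G D : dom (G ++ D) = dom G ++ dom D.
Proof. apply map_app. Qed.

Lemma upd_eq s x v : upd s x v x = v.
Proof. unfold upd; destruct (Nat.eq_dec x x); congruence. Qed.

Lemma upd_neq s x v w : w <> x -> upd s x v w = s w.
Proof. unfold upd; destruct (Nat.eq_dec w x); congruence. Qed.

Lemma upd_value s x v : (forall w, Value (s w)) -> Value v -> forall w, Value (upd s x v w).
Proof. intros Hs Hv w; unfold upd; destruct (Nat.eq_dec w x); auto. Qed.

Scheme Value_mut := Induction for Value Sort Prop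
  with Expr_mut := Induction for Expr Sort Prop.
Combined Scheme Value_Expr_mut from Value_mut, Expr_mut.

Lemma value_expr_subst :
  (forall v, Value v -> forall s, (forall w, Value (s w)) -> Value (subst s v)) /\
  (forall t, Expr t -> forall s, (forall w, Value (s w)) -> Expr (subst s t)).
Proof.
  apply Value_Expr_mut; intros; simpl; auto;
    solve [constructor; eauto using upd_value, V_var].
Qed.

Lemma value_subst s v : (forall w, Value (s w)) -> Value v -> Value (subst s v).
Proof. intros; apply value_expr_subst; auto. Qed.

(** * Typing up to permutation *)

Inductive ptyp (st : bool) : ctx -> term -> ty -> Prop :=
| P_var x A : ptyp st [(x, A)] (TVar x) A
| P_perm G G' t A : st = true -> ptyp st G t A -> Permutation G G' -> ptyp st G' t A
| P_new : ptyp st [] TNew (Lolli T1 (Plus TR T1))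
| P_delete : ptyp st [] TDelete (Lolli TR T1)
| P_let G D x t u A B :
    ptyp st D t A ->
    ptyp st (G ++ [(x, A)]) u B ->
    NoDup (dom (G ++ D)) ->
    ptyp st (G ++ D) (TLet (polarity A) x t u (polarity B)) B
| P_pair G D v w A B :
    Value v -> Value w ->
    ptyp st G v A -> ptyp st D w B ->
    NoDup (dom (G ++ D)) ->
    ptyp st (G ++ D) (TPair v w) (Tensor A B)
| P_dpair G D G' v x y t A B C :
    Value v ->
    ptyp st D v (Tensor A B) ->
    ptyp st (G ++ (x, A) :: (y, B) :: G') t C ->
    NoDup (dom (G ++ D ++ G')) ->
    ptyp st (G ++ D ++ G') (TDpair v x y t (polarity C)) C
| P_unit : ptyp st [] TUnit T1
| P_dunit G D G' v t A :
    Value v ->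
    ptyp st D v T1 ->
    ptyp st (G ++ G') t A ->
    NoDup (dom (G ++ D ++ G')) ->
    ptyp st (G ++ D ++ G') (TDunit v t (polarity A)) A
| P_inj1 G v A B : Value v -> ptyp st G v A -> ptyp st G (TInj i1 v) (Plus A B)
| P_inj2 G v A B : Value v -> ptyp st G v B -> ptyp st G (TInj i2 v) (Plus A B)
| P_dsum G D G' v x t y u A B C :
    Value v ->
    ptyp st D v (Plus A B) ->
    ptyp st (G ++ (x, A) :: G') t C ->
    ptyp st (G ++ (y, B) :: G') u C ->
    NoDup (dom (G ++ D ++ G')) ->
    ptyp st (G ++ D ++ G') (TDsum v x t y u (polarity C)) C
| P_lam G x t A B :
    ptyp st ((x, A) :: G) t B -> ptyp st G (TLam x t) (Lolli A B)
| P_app G D v w A B :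
    Value w -> Value v ->
    ptyp st G w A -> ptyp st D v (Lolli A B) ->
    NoDup (dom (G ++ D)) ->
    ptyp st (G ++ D) (TApp v w (polarity B)) B
| P_with G t u A B :
    ptyp st G t A -> ptyp st G u B -> ptyp st G (TWith t u) (With A B)
| P_proj1 G v A1 A2 :
    Value v -> ptyp st G v (With A1 A2) -> ptyp st G (TProj i1 v (polarity A1)) A1
| P_proj2 G v A1 A2 :
    Value v -> ptyp st G v (With A1 A2) -> ptyp st G (TProj i2 v (polarity A2)) A2
| P_res n : ptyp st [] (TRes n) TR.

Lemma ptyp_nodup st G t A : ptyp st G t A -> NoDup (dom G).
Proof.
  induction 1; simpl; auto using NoDup_nil.
  - repeat constructor; auto.
  - eapply Permutation_NoDup; [apply Permutation_map|]; eauto.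
  - now inversion IHptyp.
Qed.

Lemma ptyp_binder_fresh st G G' x A u C :
  ptyp st (G ++ (x, A) :: G') u C -> ~ In x (dom (G ++ G')).
Proof.
  intro Hu; apply ptyp_nodup in Hu; rewrite dom_app in *.
  exact (NoDup_remove_2 _ _ _ Hu).
Qed.

Lemma ptyp_binder2_fresh st G G' x y A B u C :
  ptyp st (G ++ (x, A) :: (y, B) :: G') u C -> ~ In y (dom (G ++ (x, A) :: G')).
Proof.
  change (G ++ (x, A) :: G') with (G ++ [(x, A)] ++ G').
  change (G ++ (x, A) :: (y, B) :: G') with (G ++ [(x, A)] ++ (y, B) :: G').
  rewrite !app_assoc; apply ptyp_binder_fresh.
Qed.

Lemma ptyp_dom_fv st G t A : ptyp st G t A -> incl (dom G) (fv t).
Proof.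
  induction 1; intros a Ha; simpl.
  2: { apply IHptyp; eapply Permutation_in; [|eassumption].
       apply Permutation_map, Permutation_sym; assumption. }
  all: repeat match goal with IH : incl _ _ |- _ => specialize (IH a) end.
  all: repeat match goal with
         | Hb : ptyp _ (_ ++ (_, _) :: (_, _) :: _) _ _ |- _ =>
             pose proof (ptyp_binder_fresh _ _ _ _ _ _ _ Hb);
             pose proof (ptyp_binder2_fresh _ _ _ _ _ _ _ _ _ Hb); clear Hb
         | Hb : ptyp _ (_ ++ (_, _) :: _) _ _ |- _ =>
             pose proof (ptyp_binder_fresh _ _ _ _ _ _ _ Hb); clear Hb
         | Hb : ptyp _ ((_, _) :: _) _ _ |- _ =>
             pose proof (ptyp_binder_fresh _ [] _ _ _ _ _ Hb); clear Hb
         end.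
  all: rewrite ?dom_app, ?in_app_iff, ?in_remove_iff in *; simpl in *.
  all: intuition congruence.
Qed.

Ltac invert_closed :=
  let H := fresh "H" in let HG := fresh "HG" in let Ht := fresh "Ht" in
  intro H;
  match type of H with ptyp _ [] ?t _ =>
    remember t as t0 eqn:Ht in H; remember (@nil (var * ty)) as G eqn:HG in H;
    revert HG Ht; induction H; intros HG Ht; try discriminate
  end;
  try match goal with IH : _ -> _ -> _, Hp : Permutation _ _ |- _ =>
    subst; apply IH; eauto using Permutation_nil, Permutation_sym end;
  repeat match goal with E : _ ++ _ = [] |- _ => apply app_eq_nil in E as [? ?] end;
  subst; try (injection Ht; intros); subst; simpl in *; eauto 10.

Lemma ptyp_nil_not_var st x A : ~ ptyp st [] (TVar x) A.
Proof. invert_closed. Qed.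

Lemma ptyp_let_inv st px x t u p B : ptyp st [] (TLet px x t u p) B ->
  exists A, px = polarity A /\ ptyp st [] t A /\ ptyp st [(x, A)] u B.
Proof. invert_closed. Qed.

Lemma ptyp_lam_inv st x t T : ptyp st [] (TLam x t) T ->
  exists A B, T = Lolli A B /\ ptyp st [(x, A)] t B.
Proof. invert_closed. Qed.

Lemma ptyp_app_inv st v w p B : ptyp st [] (TApp v w p) B ->
  exists A, ptyp st [] w A /\ ptyp st [] v (Lolli A B).
Proof. invert_closed. Qed.

Lemma ptyp_proj_inv st i v p B : ptyp st [] (TProj i v p) B ->
  exists A1 A2, B = choose i A1 A2 /\ ptyp st [] v (With A1 A2).
Proof. invert_closed. Qed.

Lemma ptyp_with_inv st t1 t2 T : ptyp st [] (TWith t1 t2) T ->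
  exists A1 A2, T = With A1 A2 /\ ptyp st [] t1 A1 /\ ptyp st [] t2 A2.
Proof. invert_closed. Qed.

Lemma ptyp_pair_inv st v w T : ptyp st [] (TPair v w) T ->
  exists A B, T = Tensor A B /\ ptyp st [] v A /\ ptyp st [] w B.
Proof. invert_closed. Qed.

Lemma ptyp_dpair_inv st v x y t p C : ptyp st [] (TDpair v x y t p) C ->
  exists A B, ptyp st [] v (Tensor A B) /\ ptyp st [(x, A); (y, B)] t C.
Proof. invert_closed. Qed.

Lemma ptyp_dunit_inv st v t p C : ptyp st [] (TDunit v t p) C -> ptyp st [] t C.
Proof. invert_closed. Qed.

Lemma ptyp_inj_inv st i v T : ptyp st [] (TInj i v) T ->
  exists A B, T = Plus A B /\ ptyp st [] v (choose i A B).
Proof. invert_closed. Qed.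

Lemma ptyp_dsum_inv st v x t y u p C : ptyp st [] (TDsum v x t y u p) C ->
  exists A B, ptyp st [] v (Plus A B) /\
    ptyp st [(x, A)] t C /\ ptyp st [(y, B)] u C.
Proof. invert_closed. Qed.

Lemma ptyp_new_inv st T : ptyp st [] TNew T -> T = Lolli T1 (Plus TR T1).
Proof. invert_closed. Qed.

Lemma ptyp_delete_inv st T : ptyp st [] TDelete T -> T = Lolli TR T1.
Proof. invert_closed. Qed.

(** * Substitution *)

Definition var_of (t : term) : option var :=
  match t with TVar z => Some z | _ => None end.

Lemma var_of_Some t z : var_of t = Some z -> t = TVar z.
Proof. destruct t; simpl; congruence. Qed.

Definition ctx_subst (s : var -> term) (G : ctx) : ctx :=
  flat_map (fun e => match var_of (s (fst e)) with
                     | Some z => [(z, snd e)]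
                     | None => []
                     end) G.

Definition subst_wf (st : bool) (s : var -> term) (G : ctx) : Prop :=
  (forall w, Value (s w)) /\
  (forall w A, In (w, A) G -> var_of (s w) = None -> ptyp st [] (s w) A) /\
  NoDup (dom (ctx_subst s G)).

Lemma ctx_subst_app s G D : ctx_subst s (G ++ D) = ctx_subst s G ++ ctx_subst s D.
Proof. apply flat_map_app. Qed.

Lemma ctx_subst_perm s G G' : Permutation G G' -> Permutation (ctx_subst s G) (ctx_subst s G').
Proof. apply Permutation_flat_map. Qed.

Lemma in_dom_ctx_subst s G z :
  In z (dom (ctx_subst s G)) -> exists w, In w (dom G) /\ s w = TVar z.
Proof.
  induction G as [|[w A] G IH]; simpl; [tauto|].
  destruct (var_of (s w)) eqn:E; simpl.
  - intros [<-|Hz]; [eauto using var_of_Some|].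
    destruct (IH Hz) as (w' & ? & ?); eauto.
  - intro Hz; destruct (IH Hz) as (w' & ? & ?); eauto.
Qed.

Lemma ctx_subst_upd_notin s x v G :
  ~ In x (dom G) -> ctx_subst (upd s x v) G = ctx_subst s G.
Proof.
  induction G as [|[w A] G IH]; simpl; intro Hx; [reflexivity|].
  rewrite upd_neq, IH; auto.
Qed.

Lemma ctx_subst_bind s G G' x A z : ~ In x (dom (G ++ G')) ->
  ctx_subst (upd s x (TVar z)) (G ++ (x, A) :: G') = ctx_subst s G ++ (z, A) :: ctx_subst s G'.
Proof.
  rewrite dom_app, in_app_iff; intro Hx.
  rewrite ctx_subst_app, (ctx_subst_upd_notin _ _ _ G) by tauto; simpl.
  now rewrite upd_eq, ctx_subst_upd_notin by tauto.
Qed.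

Lemma ctx_subst_bind2 s G G' x y A B z1 z2 :
  x <> y -> ~ In x (dom (G ++ G')) -> ~ In y (dom (G ++ G')) ->
  ctx_subst (upd (upd s x (TVar z1)) y (TVar z2)) (G ++ (x, A) :: (y, B) :: G') =
  ctx_subst s G ++ (z1, A) :: (z2, B) :: ctx_subst s G'.
Proof.
  rewrite dom_app, !in_app_iff; intros Hxy Hx Hy.
  rewrite ctx_subst_app, !(ctx_subst_upd_notin _ _ _ G) by tauto; simpl.
  rewrite upd_neq, !upd_eq, !ctx_subst_upd_notin by tauto; reflexivity.
Qed.

Lemma ctx_subst_avoid s bs u G :
  incl (dom G) (fv u) -> (forall w, In w (dom G) -> ~ In w bs) ->
  incl (dom (ctx_subst s G)) (avoid s bs u).
Proof.
  intros Hfv Hbs z Hz.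
  destruct (in_dom_ctx_subst _ _ _ Hz) as (w & Hw & Hsw).
  apply in_flat_map; exists w; split; auto.
  destruct (in_dec Nat.eq_dec w bs) as [Hin|_]; [now destruct (Hbs w Hw Hin)|].
  rewrite Hsw; now left.
Qed.

Lemma subst_wf_perm st s G G' : Permutation G G' -> subst_wf st s G -> subst_wf st s G'.
Proof.
  intros Hp (Hv & Ht & Hnd); repeat split; auto.
  - intros w A Hw; apply Ht; eapply Permutation_in; [apply Permutation_sym|]; eauto.
  - eapply Permutation_NoDup; [apply Permutation_map, ctx_subst_perm|]; eauto.
Qed.

Lemma subst_wf_app st s G D : subst_wf st s (G ++ D) -> subst_wf st s G /\ subst_wf st s D.
Proof.
  intros (Hv & Ht & Hnd); rewrite ctx_subst_app, dom_app in Hnd.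
  repeat split; eauto using NoDup_app_remove_l, NoDup_app_remove_r;
    intros; apply Ht; auto; apply in_or_app; auto.
Qed.

Lemma subst_wf_mid st s G D G' :
  subst_wf st s (G ++ D ++ G') -> subst_wf st s D /\ subst_wf st s (G ++ G').
Proof.
  intro Hwf; apply subst_wf_app.
  exact (subst_wf_perm _ _ _ _ (Permutation_app_swap_app _ _ _) Hwf).
Qed.

Lemma subst_wf_bind st s G G' x A z :
  subst_wf st s (G ++ G') -> ~ In x (dom (G ++ G')) -> ~ In z (dom (ctx_subst s (G ++ G'))) ->
  subst_wf st (upd s x (TVar z)) (G ++ (x, A) :: G').
Proof.
  intros (Hv & Ht & Hnd) Hx Hz; repeat split.
  - apply upd_value; auto using V_var.
  - intros w B Hw; unfold upd; destruct (Nat.eq_dec w x) as [->|Hne]; [discriminate|].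
    apply Ht; rewrite in_app_iff in *; simpl in Hw; intuition congruence.
  - rewrite ctx_subst_bind, dom_app by assumption; simpl.
    rewrite ctx_subst_app, dom_app in Hnd, Hz.
    apply (NoDup_Add (Add_app _ _ _)); auto.
Qed.

Section Binders.

Variables (st : bool) (s : var -> term) (G G' : ctx) (C : ty).

Lemma subst_under_binder x A u :
  ptyp st (G ++ (x, A) :: G') u C ->
  (forall s', subst_wf st s' (G ++ (x, A) :: G') ->
     ptyp st (ctx_subst s' (G ++ (x, A) :: G')) (subst s' u) C) ->
  subst_wf st s (G ++ G') ->
  ptyp st (ctx_subst s G ++ (pick x (avoid s [x] u), A) :: ctx_subst s G')
          (subst (upd s x (TVar (pick x (avoid s [x] u)))) u) C.
Proof.
  intros Hu IH Hwf.
  pose proof (ptyp_binder_fresh _ _ _ _ _ _ _ Hu) as Hx.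
  rewrite <- (ctx_subst_bind s G G' x A) by exact Hx.
  apply IH, subst_wf_bind; auto.
  intro Hz; apply (pick_not_in x (avoid s [x] u)).
  apply (ctx_subst_avoid s [x] u (G ++ G')); auto.
  - intros w Hw; apply (ptyp_dom_fv _ _ _ _ Hu).
    rewrite dom_app, in_app_iff in *; simpl; tauto.
  - intros w Hw [->|[]]; contradiction.
Qed.

Lemma subst_under_binder2 x y A B t :
  ptyp st (G ++ (x, A) :: (y, B) :: G') t C ->
  (forall s', subst_wf st s' (G ++ (x, A) :: (y, B) :: G') ->
     ptyp st (ctx_subst s' (G ++ (x, A) :: (y, B) :: G')) (subst s' t) C) ->
  subst_wf st s (G ++ G') ->
  let W := avoid s [x; y] t in
  let z1 := pick x W in
  let z2 := pick y (z1 :: W) in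
  ptyp st (ctx_subst s G ++ (z1, A) :: (z2, B) :: ctx_subst s G')
          (subst (upd (upd s x (TVar z1)) y (TVar z2)) t) C.
Proof.
  intros Ht IH Hwf W z1 z2.
  pose proof (ptyp_binder_fresh _ _ _ _ _ _ _ Ht) as Hx.
  pose proof (ptyp_binder2_fresh _ _ _ _ _ _ _ _ _ Ht) as Hy.
  rewrite !dom_app, !in_app_iff in Hx, Hy; simpl in Hx, Hy.
  assert (HW : incl (dom (ctx_subst s (G ++ G'))) W).
  { apply ctx_subst_avoid.
    - intros w Hw; apply (ptyp_dom_fv _ _ _ _ Ht).
      rewrite dom_app, in_app_iff in *; simpl; tauto.
    - rewrite dom_app; intros w Hw [->|[->|[]]]; rewrite in_app_iff in Hw; tauto. }
  assert (Hwf1 : subst_wf st (upd s x (TVar z1)) ((G ++ [(x, A)]) ++ G')).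
  { rewrite <- app_assoc; apply subst_wf_bind; auto.
    - rewrite dom_app, in_app_iff; tauto.
    - intro Hz; apply (pick_not_in x W), HW, Hz. }
  rewrite <- (ctx_subst_bind2 s G G' x y A B) by (rewrite ?dom_app, ?in_app_iff; tauto).
  apply IH.
  change (G ++ (x, A) :: (y, B) :: G') with (G ++ [(x, A)] ++ (y, B) :: G').
  rewrite app_assoc; apply subst_wf_bind; auto.
  - rewrite !dom_app, !in_app_iff; simpl; tauto.
  - rewrite <- app_assoc; cbn [app].
    rewrite ctx_subst_bind by (rewrite dom_app, in_app_iff; tauto).
    rewrite dom_app, in_app_iff; simpl; intros Hz.
    apply (pick_not_in y (z1 :: W)); simpl.
    destruct Hz as [Hz|[Hz|Hz]]; [right; apply HW | now left | right; apply HW];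
      rewrite ctx_subst_app, dom_app; apply in_or_app; auto.
Qed.

End Binders.

Lemma ptyp_subst st G t B : ptyp st G t B ->
  forall s, subst_wf st s G -> ptyp st (ctx_subst s G) (subst s t) B.
Proof.
  induction 1; intros s Hwf; pose proof Hwf as (Hv & Hcl & Hnd); simpl;
    rewrite ?ctx_subst_app in *.
  - destruct (var_of (s x)) eqn:Hx; simpl.
    + rewrite (var_of_Some _ _ Hx); constructor.
    + apply Hcl; simpl; auto.
  - apply P_perm with (ctx_subst s G); auto using ctx_subst_perm.
    apply IHptyp, (subst_wf_perm _ _ G'); [apply Permutation_sym|]; assumption.
  - constructor.
  - constructor.
  - destruct (subst_wf_app _ _ _ _ Hwf) as [HG HD].
    apply P_let; auto.
    apply (subst_under_binder st s G [] B x A u); rewrite ?app_nil_r; auto.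
  - destruct (subst_wf_app _ _ _ _ Hwf) as [HG HD].
    apply P_pair; auto using value_subst.
  - destruct (subst_wf_mid _ _ _ _ _ Hwf) as [HD HGG].
    apply P_dpair with A B; auto using value_subst.
    apply subst_under_binder2; auto.
  - constructor.
  - destruct (subst_wf_mid _ _ _ _ _ Hwf) as [HD HGG].
    apply P_dunit; auto using value_subst.
    rewrite <- ctx_subst_app; auto.
  - apply P_inj1; auto using value_subst.
  - apply P_inj2; auto using value_subst.
  - destruct (subst_wf_mid _ _ _ _ _ Hwf) as [HD HGG].
    apply P_dsum with A B; auto using value_subst; apply subst_under_binder; auto.
  - apply P_lam, (subst_under_binder st s [] G B x A t); auto.
  - destruct (subst_wf_app _ _ _ _ Hwf) as [HG HD].
    apply P_app with A; auto using value_subst.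
  - apply P_with; auto.
  - apply P_proj1 with A2; auto using value_subst.
  - apply P_proj2 with A1; auto using value_subst.
  - constructor.
Qed.

Lemma ctx_subst_closed st s G :
  (forall w A, In (w, A) G -> ptyp st [] (s w) A) -> ctx_subst s G = [].
Proof.
  induction G as [|[w A] G IH]; intro Hcl; simpl; auto.
  rewrite IH by (intros; apply Hcl; simpl; auto).
  destruct (var_of (s w)) as [z|] eqn:Hw; [exfalso|reflexivity].
  apply (ptyp_nil_not_var st z A); rewrite <- (var_of_Some _ _ Hw); apply Hcl; simpl; auto.
Qed.

Lemma ptyp_close st G t C s : ptyp st G t C ->
  (forall w, Value (s w)) -> (forall w A, In (w, A) G -> ptyp st [] (s w) A) ->
  ptyp st [] (subst s t) C.
Proof.
  intros Ht Hv Hcl; rewrite <- (ctx_subst_closed st s G Hcl).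
  apply ptyp_subst; auto; repeat split; auto.
  rewrite (ctx_subst_closed st s G Hcl); constructor.
Qed.

Lemma ptyp_subst1 st x A t B v : ptyp st [(x, A)] t B ->
  Value v -> ptyp st [] v A -> ptyp st [] (subst1 v x t) B.
Proof.
  intros Ht Hv Hvt; apply (ptyp_close _ _ _ _ _ Ht).
  - apply upd_value; [exact V_var | exact Hv].
  - intros w A' [Hw|[]]; injection Hw as -> ->; now rewrite upd_eq.
Qed.

Lemma ptyp_subst2 st x y A B t C v w : ptyp st [(x, A); (y, B)] t C ->
  Value v -> ptyp st [] v A -> Value w -> ptyp st [] w B ->
  ptyp st [] (subst2 v x w y t) C.
Proof.
  intros Ht Hv Hvt Hw Hwt.
  assert (Hxy : x <> y)
    by (intros ->; apply ptyp_nodup in Ht; inversion Ht; simpl in *; tauto).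
  apply (ptyp_close _ _ _ _ _ Ht).
  - repeat apply upd_value; auto using V_var.
  - intros z A' [Hz|[Hz|[]]]; injection Hz as -> ->;
      rewrite ?upd_neq, upd_eq by auto; assumption.
Qed.

Lemma ptyp_rename st G t A rho :
  ptyp st G t A -> NoDup (dom (map (fun e => (rho (fst e), snd e)) G)) ->
  ptyp st (map (fun e => (rho (fst e), snd e)) G) (rename rho t) A.
Proof.
  assert (Hctx : ctx_subst (fun w => TVar (rho w)) G =
                 map (fun e => (rho (fst e), snd e)) G)
    by (induction G; simpl; congruence).
  intros Ht Hnd; rewrite <- Hctx; apply ptyp_subst; auto.
  repeat split; [exact (fun w => V_var (rho w)) | discriminate | now rewrite Hctx].
Qed.

Lemma upd_TVar x : upd TVar x (TVar x) = TVar.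
Proof.
  apply functional_extensionality; intro w.
  unfold upd; destruct (Nat.eq_dec w x); congruence.
Qed.

Lemma binder_notin_avoid_TVar x bs u : In x bs -> ~ In x (avoid TVar bs u).
Proof.
  intro Hx; unfold avoid; rewrite in_flat_map.
  intros (w & _ & Hw); destruct (in_dec Nat.eq_dec w bs); simpl in Hw; intuition (subst; auto).
Qed.

Lemma pick_avoid_TVar x bs u : In x bs -> pick x (avoid TVar bs u) = x.
Proof. intro Hx; apply pick_id, binder_notin_avoid_TVar, Hx. Qed.

Lemma subst_TVar_typed st G t A : ptyp st G t A -> subst TVar t = t.
Proof.
  induction 1; simpl; rewrite ?pick_avoid_TVar, ?upd_TVar by (simpl; auto); try congruence.
  rewrite pick_id, upd_TVar; [congruence|].
  pose proof (ptyp_binder_fresh _ _ _ _ _ _ _ H1) as Hx.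
  intros [->|Hy]; [|revert Hy; apply binder_notin_avoid_TVar; simpl; auto].
  rewrite dom_app, in_app_iff in Hx; simpl in Hx; tauto.
Qed.

Lemma ptyp_typ st G t A : ptyp st G t A -> typ st G t A.
Proof.
  induction 1; try (econstructor; eauto; fail).
  rewrite <- (subst_TVar_typed _ _ _ _ H0).
  apply (T_struct st G G' t A (fun x => x)); auto.
  - eapply Permutation_NoDup; [apply Permutation_map, H1|].
    eapply ptyp_nodup, P_perm; eauto.
  - rewrite (map_ext_in _ (fun e => e)), map_id by (intros []; reflexivity); exact H1.
Qed.

Lemma typ_ptyp st G t A : typ st G t A -> ptyp st G t A.
Proof.
  induction 1; try (econstructor; eauto; fail).
  apply P_perm with (map (fun e => (rho (fst e), snd e)) G); auto.
  apply ptyp_rename; auto.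
  eapply Permutation_NoDup; [apply Permutation_map, Permutation_sym, H2 | exact H1].
Qed.

(** * Subject reduction *)

Lemma ptyp_let_reduct st px x v t p B :
  Value v -> ptyp st [] (TLet px x v t p) B -> ptyp st [] (subst1 v x t) B.
Proof.
  intros Hv Ht; destruct (ptyp_let_inv _ _ _ _ _ _ _ Ht) as (A & _ & HvA & Hu).
  eauto using ptyp_subst1.
Qed.

Lemma ptyp_dpair_reduct st v w x y t p C : Value v -> Value w ->
  ptyp st [] (TDpair (TPair v w) x y t p) C -> ptyp st [] (subst2 v x w y t) C.
Proof.
  intros Hv Hw Ht; destruct (ptyp_dpair_inv _ _ _ _ _ _ _ Ht) as (A & B & Hp & Hu).
  destruct (ptyp_pair_inv _ _ _ _ Hp) as (A' & B' & [= -> ->] & HvA & HwB).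
  eauto using ptyp_subst2.
Qed.

Lemma ptyp_dsum_reduct st i v x1 t1 x2 t2 p C : Value v ->
  ptyp st [] (TDsum (TInj i v) x1 t1 x2 t2 p) C ->
  ptyp st [] (subst1 v (choose i x1 x2) (choose i t1 t2)) C.
Proof.
  intros Hv Ht; destruct (ptyp_dsum_inv _ _ _ _ _ _ _ _ Ht) as (A & B & Hi & Hu1 & Hu2).
  destruct (ptyp_inj_inv _ _ _ _ Hi) as (A' & B' & [= -> ->] & HvA).
  destruct i; eauto using ptyp_subst1.
Qed.

Lemma styp_bind_inv st x t e s T A : styp st (SBind x t e s) T A ->
  exists B, e = polarity B /\ typ st [(x, T)] t B /\ styp st s B A.
Proof. inversion 1; eauto. Qed.

Lemma ctyp_ptyp st t s l e A :
  ctyp st (Cmd t s l e) A <-> exists B, polarity B = e /\ ptyp st [] t B /\ styp st s B A.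
Proof.
  split; intros (B & HB & Ht & Hs); exists B; auto using ptyp_typ, typ_ptyp.
Qed.

Theorem theorem2 :
  forall (st : bool) (A : ty) (c1 c2 : cmd),
    ctyp st c1 A -> red c1 c2 -> ctyp st c2 A.
Proof.
  intros st A c1 c2 Hc Hr.
  destruct Hr; rewrite ctyp_ptyp in *; destruct Hc as (B & HB & Ht & Hs).
  - exists B; repeat split; eauto using ptyp_let_reduct.
  - destruct (ptyp_let_inv _ _ _ _ _ _ _ Ht) as (A' & -> & Ht' & Hu).
    exists A'; repeat split; eauto using ptyp_typ, S_bind.
  - destruct (styp_bind_inv _ _ _ _ _ _ _ Hs) as (B' & -> & Hu & Hs').
    exists B'; repeat split; eauto using ptyp_subst1, typ_ptyp.
  - destruct (ptyp_app_inv _ _ _ _ _ Ht) as (A' & Hw & Hv).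
    exists (Lolli A' B); repeat split; eauto using ptyp_typ, S_val.
  - destruct (ptyp_lam_inv _ _ _ _ Ht) as (A1 & B1 & -> & Hu); inversion Hs; subst.
    exists B1; repeat split; eauto using ptyp_subst1, typ_ptyp.
  - destruct (ptyp_proj_inv _ _ _ _ _ Ht) as (A1 & A2 & -> & Hv).
    exists (With A1 A2); repeat split; eauto using ptyp_typ, S_proj.
  - destruct (ptyp_with_inv _ _ _ _ Ht) as (A1 & A2 & -> & H1 & H2); inversion Hs; subst.
    exists (choose i A1 A2); repeat split; destruct i; auto.
  - exists B; repeat split; eauto using ptyp_dpair_reduct.
  - exists B; repeat split; eauto using ptyp_dunit_inv.
  - exists B; repeat split; eauto using ptyp_dsum_reduct.
  - rewrite (ptyp_new_inv _ _ Ht) in Hs; inversion Hs; subst.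
    exists (Plus TR T1); repeat split; eauto using ptyp, Value.
  - rewrite (ptyp_new_inv _ _ Ht) in Hs; inversion Hs; subst.
    exists (Plus TR T1); repeat split; eauto using ptyp, Value.
  - rewrite (ptyp_delete_inv _ _ Ht) in Hs; inversion Hs; subst.
    exists T1; repeat split; eauto using ptyp, Value.
Qed.
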